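(* Let $\mathscr{A}$ be a finite alphabet with more than one letter and let $\mathcal{D}$ be a dictionary over $\mathscr{A}$ with subword complexity function $p(k)=\#(\mathcal{D}\cap\mathscr{A}^k)$. Then for every $k\in\mathbb{N}$, $n_{br}^\pm(k)\leq p(k+1)-p(k)$ and $$\frac{p(k+1)-p(k)}{\#\mathscr{A}-1}\leq n_{br}(k)\leq 2\big(p(k+1)-p(k)\big).$$ Moreover these estimates are optimal.
   Context: A dictionary is a non-empty set $\mathcal{D}$ of finite words over $\mathscr{A}$ containing the empty word, closed under taking subwords, and such that for each $u\in\mathcal{D}$ there are letters $a,b$ with $aub\in\mathcal{D}$. The GAP-graph $\mathscr{G}_k$ has vertex set $\mathcal{D}\cap\mathscr{A}^k$, edge set $\mathcal{D}\cap\mathscr{A}^{k+1}$, the edge $e=a_0\cdots a_k$ going from $\partial_0e=a_0\cdots a_{k-1}$ to $\partial_1e=a_1\cdots a_k$. For a vertex $u$, $\partial^+u$ (resp. $\partial^-u$) is the number of edges $e$ with $\partial_0e=u$ (resp. $\partial_1e=u$). $n_{br}^+(k)$ (resp. $n_{br}^-(k)$) is the number of vertices $u$ of $\mathscr{G}_k$ with $\partial^+u>1$ (resp. $\partial^-u>1$), and $n_{br}(k)$ is the number of vertices $u$ with $\partial^+u>1$ or $\partial^-u>1$. *)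

From mathcomp Require Import all_boot all_order all_algebra.
Set Implicit Arguments. Unset Strict Implicit. Unset Printing Implicit Defensive.

(* Words over the alphabet A are sequences; a set of words is a boolean
   predicate on seq A.  "Subword" = contiguous factor (seq.infix). *)
Section Dict.
Variable A : finType.

Definition dictionary (D : pred (seq A)) : Prop :=
  [/\ D [::],
      (forall u w : seq A, D w -> infix u w -> D u) &
      (forall u : seq A, D u -> exists a b : A, D (a :: rcons u b))].

Definition compl (D : pred (seq A)) (k : nat) : nat :=
  #|[set w : k.-tuple A | D w]|.

(* GAP-graph G_k: vertices = words of length k in D, edges = words of
   length k+1 in D; edge e goes from take k e (∂0) to drop 1 e (∂1). *)
Definition outdeg (D : pred (seq A)) (k : nat) (u : k.-tuple A) : nat :=
  #|[set e : k.+1.-tuple A | D e & take k e == u]|.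
Definition indeg (D : pred (seq A)) (k : nat) (u : k.-tuple A) : nat :=
  #|[set e : k.+1.-tuple A | D e & drop 1 e == u]|.

Definition nbr_plus (D : pred (seq A)) (k : nat) : nat :=
  #|[set u : k.-tuple A | D u & 1 < outdeg D u]|.
Definition nbr_minus (D : pred (seq A)) (k : nat) : nat :=
  #|[set u : k.-tuple A | D u & 1 < indeg D u]|.
Definition nbr (D : pred (seq A)) (k : nat) : nat :=
  #|[set u : k.-tuple A | D u & (1 < outdeg D u) || (1 < indeg D u)]|.
End Dict.

From mathcomp Require Import all_boot all_order all_algebra.
From mathcomp Require Import zify.
Set Implicit Arguments. Unset Strict Implicit. Unset Printing Implicit Defensive.

(* Counting the edges of the GAP-graph G_k by their sources, resp. targets,
   gives p(k+1) = sum_u d+(u) = sum_u d-(u) over the vertices u, and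
   1 <= d+-(u) <= #A since every word of a dictionary extends on both sides.
   So p(k+1) - p(k) = sum_u (d+(u) - 1), to which each vertex with
   d+(u) > 1 contributes between 1 and #A - 1 and every other vertex 0;
   n_br <= n+_br + n-_br gives the factor 2.  The bounds are attained at k = 0
   by the full shift and by the dictionary of the words a^i b^j, and at k = 1
   by the latter, where only a branches forwards and only b backwards. *)

Section CountGt1.
Variable T : finType.
Implicit Types (P Q : pred T) (d : T -> nat).

Lemma card_set_sum P : #|[set u | P u]| = \sum_(u | P u) 1.
Proof. by rewrite -sum1_card; apply: eq_bigl => u; rewrite inE. Qed.

Lemma card_setI_sum P Q : #|[set u | P u & Q u]| = \sum_(u | P u) Q u.
Proof.
rewrite -sum1_card big_mkcond [RHS]big_mkcond; apply: eq_bigr => u _.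
by rewrite inE; case: (P u); case: (Q u).
Qed.

Lemma card_set_fibers (U : finType) (Q : pred U) (g : T -> U) P :
    (forall t, P t -> Q (g t)) ->
  #|[set t | P t]| = \sum_(u | Q u) #|[set t | P t & g t == u]|.
Proof.
move=> PQg; rewrite card_set_sum (partition_big g Q) //.
by apply: eq_bigr => u _; rewrite -sum1_card; apply: eq_bigl => t; rewrite inE.
Qed.

Lemma card_add_card_gt1_le_sum P d : (forall u, P u -> 0 < d u) ->
  #|[set u | P u]| + #|[set u | P u & 1 < d u]| <= \sum_(u | P u) d u.
Proof.
move=> d_gt0; rewrite card_set_sum card_setI_sum -big_split /=.
by apply: leq_sum => u /d_gt0; case: ltnP => /=; lia.
Qed.

Lemma sum_le_card_add_card_gt1 P d m : (forall u, P u -> d u <= m) ->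
  \sum_(u | P u) d u <= #|[set u | P u]| + (m - 1) * #|[set u | P u & 1 < d u]|.
Proof.
move=> d_le; rewrite card_set_sum card_setI_sum big_distrr -big_split /=.
by apply: leq_sum => u /d_le; case: ltnP => /=; lia.
Qed.

End CountGt1.

Section GapGraph.
Variables (A : finType) (D : pred (seq A)).
Hypothesis dictD : dictionary D.

Lemma dictionary_infix u w : D w -> infix u w -> D u.
Proof. by case: dictD => _ D_infix _; apply: D_infix. Qed.

Variable k : nat.

Lemma size_edge_source (e : k.+1.-tuple A) : size (take k e) == k.
Proof. by rewrite size_take size_tuple ltnSn. Qed.

Definition edge_source (e : k.+1.-tuple A) : k.-tuple A := Tuple (size_edge_source e).
Definition edge_target (e : k.+1.-tuple A) : k.-tuple A := [tuple of behead e].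

Lemma compl_succ_sum_outdeg :
  compl D k.+1 = \sum_(u : k.-tuple A | D u) outdeg D u.
Proof.
rewrite /compl (card_set_fibers (Q := fun u : k.-tuple A => D u) (g := edge_source)).
  by apply: eq_bigr => u _; apply: eq_card => e; rewrite !inE.
by move=> e De; apply: dictionary_infix De _; apply/prefixW/prefix_take.
Qed.

Lemma compl_succ_sum_indeg :
  compl D k.+1 = \sum_(u : k.-tuple A | D u) indeg D u.
Proof.
rewrite /compl (card_set_fibers (Q := fun u : k.-tuple A => D u) (g := edge_target)).
  by apply: eq_bigr => u _; apply: eq_card => e; rewrite !inE drop1.
by move=> e De; apply: dictionary_infix De _; rewrite /= -drop1; apply/suffixW/suffix_drop.
Qed.

Lemma outdeg_gt0 (u : k.-tuple A) : D u -> 0 < outdeg D u.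
Proof.
case: dictD => _ _ /[apply] -[a [b Daub]].
rewrite card_gt0; apply/set0Pn; exists [tuple of rcons u b].
rewrite !inE /= -cats1 take_size_cat ?size_tuple // eqxx andbT cats1.
by apply: dictionary_infix Daub _; apply: infix_cons.
Qed.

Lemma indeg_gt0 (u : k.-tuple A) : D u -> 0 < indeg D u.
Proof.
case: dictD => _ _ /[apply] -[a [b Daub]].
rewrite card_gt0; apply/set0Pn; exists [tuple of a :: u].
rewrite !inE /= drop0 eqxx andbT.
by apply: dictionary_infix Daub _; rewrite -cats1 -cat_cons; apply: prefix_infix.
Qed.

Lemma outdeg_le_card (u : k.-tuple A) : outdeg D u <= #|A|.
Proof.
rewrite -[#|A|]cardsT; apply: leq_trans (leq_imset_card (fun b => [tuple of rcons u b]) _).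
apply: subset_leq_card; apply/subsetP => e; rewrite !inE => /andP[_ /eqP eu].
apply/imsetP; exists (nth (thead e) e k); rewrite ?inE //; apply: val_inj => /=.
by rewrite -eu -take_nth ?size_tuple // take_oversize ?size_tuple.
Qed.

Lemma nbr_plus_add_compl_le : nbr_plus D k + compl D k <= compl D k.+1.
Proof.
by rewrite addnC compl_succ_sum_outdeg; apply: card_add_card_gt1_le_sum outdeg_gt0.
Qed.

Lemma nbr_minus_add_compl_le : nbr_minus D k + compl D k <= compl D k.+1.
Proof.
by rewrite addnC compl_succ_sum_indeg; apply: card_add_card_gt1_le_sum indeg_gt0.
Qed.

Lemma compl_succ_le_nbr : compl D k.+1 <= compl D k + (#|A| - 1) * nbr D k.
Proof.
rewrite compl_succ_sum_outdeg.
apply: leq_trans (sum_le_card_add_card_gt1 (fun u _ => outdeg_le_card u)) _.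
rewrite leq_add2l leq_mul2l; apply/orP; right; apply: subset_leq_card.
by apply/subsetP => u; rewrite !inE => /andP[-> ->].
Qed.

End GapGraph.

Lemma nbr_le_nbr_plus_minus (A : finType) (D : pred (seq A)) k :
  nbr D k <= nbr_plus D k + nbr_minus D k.
Proof.
rewrite /nbr /nbr_plus /nbr_minus !card_setI_sum -big_split /=.
by apply: leq_sum => u _; case: (1 < _); case: (1 < _).
Qed.

Lemma card_set_tuple0 (T : finType) (P : pred (0.-tuple T)) :
  #|[set u | P u]| = P [tuple].
Proof.
have -> : [set u | P u] = if P [tuple] then setT else set0.
  by apply/setP => u; rewrite inE [u]tuple0; case: (P _); rewrite inE.
by case: (P _); rewrite ?cardsT ?card_tuple ?cards0.
Qed.

Section LevelZero.
Variables (A : finType) (D : pred (seq A)).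
Hypothesis dictD : dictionary D.

Lemma compl0 : compl D 0 = 1.
Proof. by rewrite /compl card_set_tuple0; case: dictD => ->. Qed.

Lemma outdeg_nil (u : 0.-tuple A) : outdeg D u = compl D 1.
Proof. by apply: eq_card => e; rewrite !inE take0 tuple0 eqxx andbT. Qed.

Lemma indeg_nil (u : 0.-tuple A) : indeg D u = compl D 1.
Proof.
by apply: eq_card => e; rewrite !inE tuple0 drop_oversize ?size_tuple // eqxx andbT.
Qed.

Lemma nbr0 :
  [/\ nbr_plus D 0 = (1 < compl D 1), nbr_minus D 0 = (1 < compl D 1)
    & nbr D 0 = (1 < compl D 1)].
Proof.
have D0 : D [::] by case: dictD.
by rewrite /nbr_plus /nbr_minus /nbr !card_set_tuple0 /= outdeg_nil indeg_nil D0 orbb.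
Qed.

End LevelZero.

Lemma dictionary_all_words (A : finType) (a : A) : dictionary (xpredT : pred (seq A)).
Proof. by split=> // u _; exists a, a. Qed.

Lemma compl_all_words (A : finType) n : compl (xpredT : pred (seq A)) n = #|A| ^ n.
Proof. by rewrite /compl -card_tuple -cardsT; apply: eq_card => w; rewrite !inE. Qed.

Lemma pairwise_nseq (T : Type) (r : rel T) n x : r x x -> pairwise r (nseq n x).
Proof. by move=> rxx; elim: n => //= n ->; rewrite all_nseq rxx orbT. Qed.

Section StairWords.
Variables (A : finType) (a b : A).

(* The words a^i b^j: every letter is a or b, and no b precedes an a. *)
Definition stair_words : pred (seq A) :=
  fun w => pairwise (fun x y => (x == a) || (y == b)) w && all (mem [:: a; b]) w.

Lemma stair_words_dictionary : dictionary stair_words.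
Proof.
split=> // [u w /andP[pw aw] /infixW uw | u /andP[pu au]].
  rewrite /stair_words (subseq_pairwise uw pw).
  by apply/allP => x /(mem_subseq uw)/(allP aw).
exists a, b; rewrite /stair_words pairwise_cons pairwise_rcons pu /= !all_rcons.
rewrite !inE !eqxx !orbT /= all_predT au andbT.
by apply/and3P; split=> //; apply/allP => x _; rewrite orbT.
Qed.

Lemma stair_words_nseq i j : stair_words (nseq i a ++ nseq j b).
Proof.
rewrite /stair_words pairwise_cat all_cat !all_nseq !pairwise_nseq ?eqxx ?orbT //.
rewrite !inE !eqxx !orbT !andbT.
by apply/allrelP => x y /nseqP[-> _] _; rewrite eqxx.
Qed.

Hypothesis neq_ab : a != b.

Let nba : (b == a) = false. Proof. by rewrite eq_sym (negbTE neq_ab). Qed.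

Lemma count_stair i j : count_mem a (nseq i a ++ nseq j b) = i.
Proof. by rewrite count_cat !count_nseq /= eqxx nba mul1n addn0. Qed.

Lemma stair_wordsE w : stair_words w ->
  w = nseq (count_mem a w) a ++ nseq (size w - count_mem a w) b.
Proof.
elim: w => [//|x w IH] /andP[/andP[xw pw] /andP[xab aw]].
have /IH wE : stair_words w by apply/andP.
case: (eqVneq x a) => [-> | nxa]; rewrite /= ?eqxx.
  by rewrite add1n subSS {1}wE.
move: xab xw; rewrite !inE (negbTE nxa) /= => /eqP -> /all_pred1P wb.
by rewrite wb count_nseq /= nba mul0n subn0 size_nseq.
Qed.

Lemma size_stair n (i : 'I_n.+1) : size (nseq i a ++ nseq (n - i) b) == n.
Proof. by rewrite size_cat !size_nseq subnKC // -ltnS. Qed.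

Definition stair n (i : 'I_n.+1) : n.-tuple A := Tuple (size_stair i).

Lemma compl_stair_words n : compl stair_words n = n.+1.
Proof.
have stair_inj : injective (@stair n).
  move=> i j /(congr1 (fun w : n.-tuple A => count_mem a w)).
  by rewrite !count_stair => /val_inj.
rewrite -[RHS]card_ord -cardsT -(card_imset _ stair_inj) /compl; apply: eq_card => w.
rewrite inE; apply/idP/imsetP => [/stair_wordsE wE | [i _ ->]]; last exact: stair_words_nseq.
exists (inord (count_mem a w)) => //; apply: val_inj => /=.
have cnt_le : count_mem a w < n.+1 by rewrite ltnS -{2}(size_tuple w) count_size.
by rewrite inordK // {1}wE size_tuple.
Qed.

Lemma nbr_stair_words1 : nbr stair_words 1 = 2.
Proof.
rewrite -(compl_stair_words 1) /nbr /compl; apply: eq_card => -[[|x []] //= sz1].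
rewrite !inE; case Sx: (stair_words [:: x]) => //=.
move: Sx; rewrite {1}/stair_words /= !inE andbT => /orP[] /eqP ->.
  apply/orP; left; apply/card_gt1P; exists [tuple a; a], [tuple a; b].
  rewrite !inE -!val_eqE /= /stair_words /= !inE !eqxx !orbT.
  by rewrite !eqseq_cons (negbTE neq_ab) andbF.
apply/orP; right; apply/card_gt1P; exists [tuple a; b], [tuple b; b].
by rewrite !inE -!val_eqE /= /stair_words /= !inE !eqxx !orbT !eqseq_cons (negbTE neq_ab).
Qed.

End StairWords.

Import Order.TTheory GRing.Theory Num.Theory.
Local Open Scope ring_scope.

Theorem proposition12 (A : finType) (hA : (1 < #|A|)%N) :
  (forall (D : pred (seq A)), dictionary D -> forall k : nat,
     [/\ ((nbr_plus D k)%:R <= (compl D k.+1)%:R - (compl D k)%:R :> rat),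
         ((nbr_minus D k)%:R <= (compl D k.+1)%:R - (compl D k)%:R :> rat),
         (((compl D k.+1)%:R - (compl D k)%:R) / (#|A|%:R - 1)
            <= (nbr D k)%:R :> rat) &
         ((nbr D k)%:R <= 2 * ((compl D k.+1)%:R - (compl D k)%:R) :> rat)])
  /\
  (* optimality: each bound is attained, non-trivially (p(k+1) <> p(k)) *)
  [/\ (exists (D : pred (seq A)) (k : nat), [/\ dictionary D,
          compl D k.+1 != compl D k &
          (nbr_plus D k)%:R = (compl D k.+1)%:R - (compl D k)%:R :> rat]),
      (exists (D : pred (seq A)) (k : nat), [/\ dictionary D,
          compl D k.+1 != compl D k &
          (nbr_minus D k)%:R = (compl D k.+1)%:R - (compl D k)%:R :> rat]),
      (exists (D : pred (seq A)) (k : nat), [/\ dictionary D,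
          compl D k.+1 != compl D k &
          ((compl D k.+1)%:R - (compl D k)%:R) / (#|A|%:R - 1)
            = (nbr D k)%:R :> rat]) &
      (exists (D : pred (seq A)) (k : nat), [/\ dictionary D,
          compl D k.+1 != compl D k &
          (nbr D k)%:R = 2 * ((compl D k.+1)%:R - (compl D k)%:R) :> rat])].
Proof.
have A1 : #|A|%:R - 1 = (#|A| - 1)%:R :> rat by rewrite natrB // ltnW.
split=> [D dictD k | ].
  have plus_le := nbr_plus_add_compl_le dictD k.
  have minus_le := nbr_minus_add_compl_le dictD k.
  have succ_le := compl_succ_le_nbr dictD k.
  have nbr_le := nbr_le_nbr_plus_minus D k.
  rewrite -natrB ?(leq_trans (leq_addl _ _) plus_le) // A1.
  rewrite ler_pdivrMr ?ltr0n ?subn_gt0 // -!natrM !ler_nat.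
  by split; lia.
case/card_gt1P: (hA) => a [b [_ _ neq_ab]].
have stairD := stair_words_dictionary a b.
have allD := dictionary_all_words a.
have [plus0 minus0 _] := nbr0 stairD.
have [_ _ all0] := nbr0 allD.
split.
- exists (stair_words a b), 0%N.
  by rewrite plus0 !compl_stair_words // -natrB.
- exists (stair_words a b), 0%N.
  by rewrite minus0 !compl_stair_words // -natrB.
- exists xpredT, 0%N.
  rewrite all0 !compl_all_words expn1 expn0 hA A1 divff ?pnatr_eq0 ?subn_eq0 -?ltnNge //.
  by rewrite neq_ltn hA orbT.
- exists (stair_words a b), 1%N.
  by rewrite nbr_stair_words1 // !compl_stair_words // -natrB.
Qed.
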